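(* Let $n\ge 4$ and let $\varepsilon:UV_n(2)\to\mathrm{GL}_{n+1}(\mathbb{C})$ be a nontrivial homogeneous $3$-local representation. Then, up to equivalence, $\varepsilon$ is equal to one of four representations $\varepsilon_j$ ($1\le j\le 4$) given by $\varepsilon_j(\rho_i)=\mathrm{diag}(I_{i-1},R^{(j)},I_{n-i-1})$, $\varepsilon_j(\sigma_{i,1})=\mathrm{diag}(I_{i-1},S_1^{(j)},I_{n-i-1})$, $\varepsilon_j(\sigma_{i,2})=\mathrm{diag}(I_{i-1},S_2^{(j)},I_{n-i-1})$ for all $1\le i\le n-1$, where (with $t\in\{1,2\}$): (1) $R^{(1)}=\begin{pmatrix}1&0&0\\0&0&r_6\\0&\frac1{r_6}&0\end{pmatrix}$, $S_t^{(1)}=\begin{pmatrix}1&0&0\\0&s_{5,t}&s_{6,t}\\0&s_{8,t}&s_{9,t}\end{pmatrix}$, with $r_6\ne0$ and $s_{5,t}s_{9,t}-s_{6,t}s_{8,t}\ne0$; (2) $R^{(2)}=\begin{pmatrix}0&r_2&0\\ \frac1{r_2}&0&0\\0&0&1\end{pmatrix}$, $S_t^{(2)}=\begin{pmatrix}s_{1,t}&s_{2,t}&0\\ s_{4,t}&s_{5,t}&0\\0&0&1\end{pmatrix}$, with $r_2\ne0$ and $s_{1,t}s_{5,t}-s_{2,t}s_{4,t}\ne0$; (3) $R^{(3)}=\begin{pmatrix}1&0&0\\ \frac1{r_6}&-1&r_6\\0&0&1\end{pmatrix}$, $S_t^{(3)}=\begin{pmatrix}1&0&0\\ s_{4,t}&s_{5,t}&r_6(1-r_6s_{4,t}-s_{5,t})\\0&0&1\end{pmatrix}$,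 with $r_6\ne0$ and $s_{5,t}\ne0$; (4) $R^{(4)}=\begin{pmatrix}1&r_2&0\\0&-1&0\\0&\frac1{r_2}&1\end{pmatrix}$, $S_t^{(4)}=\begin{pmatrix}1&r_2(1-s_{5,t}-r_2s_{8,t})&0\\0&s_{5,t}&0\\0&s_{8,t}&1\end{pmatrix}$, with $r_2\ne0$ and $s_{5,t}\ne0$. All parameters are complex numbers.
   Context: $UV_n(c)$ is the group with generators $\rho_i$ ($1\le i\le n-1$), $\sigma_{i,t}$ ($1\le i\le n-1$, $1\le t\le c$) and relations $\rho_i\rho_{i+1}\rho_i=\rho_{i+1}\rho_i\rho_{i+1}$, $\rho_i\rho_j=\rho_j\rho_i$ ($|i-j|\ge2$), $\rho_i^2=1$, $\sigma_{i,t}\sigma_{j,\ell}=\sigma_{j,\ell}\sigma_{i,t}$ ($|i-j|\ge2$), $\sigma_{i,t}\rho_j=\rho_j\sigma_{i,t}$ ($|i-j|\ge2$), $\rho_i\rho_{i+1}\sigma_{i,t}=\sigma_{i+1,t}\rho_i\rho_{i+1}$ ($1\le i\le n-2$). A representation $\theta:UV_n(2)\to\mathrm{GL}_{n+1}(\mathbb{C})$ is homogeneous $3$-local if there are $R,S_1,S_2\in\mathrm{GL}_3(\mathbb{C})$ with $\theta(\rho_i)=\mathrm{diag}(I_{i-1},R,I_{n-i-1})$, $\theta(\sigma_{i,t})=\mathrm{diag}(I_{i-1},S_t,I_{n-i-1})$ for all $i$ and $t=1,2$ (block diagonal, $I_r$ the $r\times r$ identity). Nontrivial means not the trivial representation;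 equivalence means conjugacy by a fixed invertible matrix. *)

(* Complex numbers are modelled as  R[i] = complex R  for a
   real field  R : realType  (real_closed's complex.v); with R the reals this
   is the field of complex numbers. *)
From HB Require Import structures.
From mathcomp Require Import all_boot all_order all_algebra.
From mathcomp Require Import reals complex.
Set Implicit Arguments. Unset Strict Implicit. Unset Printing Implicit Defensive.
Import Order.TTheory GRing.Theory Num.Theory.
Local Open Scope ring_scope.

Section Defs.
Variable C : fieldType.

Definition mx3 (a b c d e f g h k : C) : 'M[C]_3 :=
  \matrix_(i < 3, j < 3)
    nth 0 (nth [::] [:: [:: a; b; c]; [:: d; e; f]; [:: g; h; k]] i) j.

(* blk n i M = diag(I_{i-1}, M, I_{n-i-1}) in M_{n+1}, for 1 <= i <= n-1
   (the 3x3 block occupies rows/columns i-1, i, i+1, 0-indexed). *)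
Definition blk (n i : nat) (M : 'M[C]_3) : 'M[C]_n.+1 :=
  \matrix_(a < n.+1, b < n.+1)
    if ((i.-1 <= a < i.+2) && (i.-1 <= b < i.+2))%N
    then M (inord (a - i.-1)) (inord (b - i.-1))
    else (a == b)%:R.

(* The assignment respects all defining relations of UV_n(2), hence
   (von Dyck) defines a homomorphism UV_n(2) -> GL_{n+1}. Indices i, j
   range over 1 <= i, j <= n-1. *)
Definition is_UV2_rep (n : nat) (R S1 S2 : 'M[C]_3) : Prop :=
  let rho i := blk n i R in
  let sig t i := blk n i (if t == 1%N then S1 else S2) in
  let gen i := (1 <= i <= n.-1)%N in
  let far i j := (i.+2 <= j)%N || (j.+2 <= i)%N in
      (forall i, (1 <= i <= n.-2)%N ->
         rho i *m rho i.+1 *m rho i = rho i.+1 *m rho i *m rho i.+1) /\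
      (forall i j, gen i -> gen j -> far i j -> rho i *m rho j = rho j *m rho i) /\
      (forall i, gen i -> rho i *m rho i = 1%:M) /\
      (forall i j t l, gen i -> gen j -> far i j -> (1 <= t <= 2)%N ->
         (1 <= l <= 2)%N -> sig t i *m sig l j = sig l j *m sig t i) /\
      (forall i j t, gen i -> gen j -> far i j -> (1 <= t <= 2)%N ->
         sig t i *m rho j = rho j *m sig t i) /\
      (forall i t, (1 <= i <= n.-2)%N -> (1 <= t <= 2)%N ->
         rho i *m rho i.+1 *m sig t i = sig t i.+1 *m rho i *m rho i.+1).

Definition homog3local_rep (n : nat) (R S1 S2 : 'M[C]_3) : Prop :=
  [/\ R \in unitmx, S1 \in unitmx, S2 \in unitmx & is_UV2_rep n R S1 S2].

Definition trivial_rep (n : nat) (R S1 S2 : 'M[C]_3) : Prop :=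
  forall i, (1 <= i <= n.-1)%N ->
    [/\ blk n i R = 1%:M, blk n i S1 = 1%:M & blk n i S2 = 1%:M].

Definition equiv_rep (n : nat) (R S1 S2 R' S1' S2' : 'M[C]_3) : Prop :=
  exists2 P : 'M[C]_n.+1, P \in unitmx &
    forall i, (1 <= i <= n.-1)%N ->
      [/\ P *m blk n i R *m invmx P = blk n i R',
          P *m blk n i S1 *m invmx P = blk n i S1' &
          P *m blk n i S2 *m invmx P = blk n i S2'].

(* the four families; parameters indexed (s_{k,1}, s_{k,2}) = (a_k, b_k) *)
Definition eps1 (R S1 S2 : 'M[C]_3) : Prop :=
  exists r6 a5 a6 a8 a9 b5 b6 b8 b9 : C,
    [/\ r6 != 0, a5 * a9 - a6 * a8 != 0 & b5 * b9 - b6 * b8 != 0] /\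
     [/\         R = mx3 1 0 0  0 0 r6  0 r6^-1 0,
        S1 = mx3 1 0 0  0 a5 a6  0 a8 a9 &
        S2 = mx3 1 0 0  0 b5 b6  0 b8 b9].

Definition eps2 (R S1 S2 : 'M[C]_3) : Prop :=
  exists r2 a1 a2 a4 a5 b1 b2 b4 b5 : C,
    [/\ r2 != 0, a1 * a5 - a2 * a4 != 0 & b1 * b5 - b2 * b4 != 0] /\
     [/\         R = mx3 0 r2 0  r2^-1 0 0  0 0 1,
        S1 = mx3 a1 a2 0  a4 a5 0  0 0 1 &
        S2 = mx3 b1 b2 0  b4 b5 0  0 0 1].

Definition eps3 (R S1 S2 : 'M[C]_3) : Prop :=
  exists r6 a4 a5 b4 b5 : C,
    [/\ r6 != 0, a5 != 0 & b5 != 0] /\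
     [/\         R = mx3 1 0 0  r6^-1 (-1) r6  0 0 1,
        S1 = mx3 1 0 0  a4 a5 (r6 * (1 - r6 * a4 - a5))  0 0 1 &
        S2 = mx3 1 0 0  b4 b5 (r6 * (1 - r6 * b4 - b5))  0 0 1].

Definition eps4 (R S1 S2 : 'M[C]_3) : Prop :=
  exists r2 a5 a8 b5 b8 : C,
    [/\ r2 != 0, a5 != 0 & b5 != 0] /\
     [/\         R = mx3 1 r2 0  0 (-1) 0  0 r2^-1 1,
        S1 = mx3 1 (r2 * (1 - a5 - r2 * a8)) 0  0 a5 0  0 a8 1 &
        S2 = mx3 1 (r2 * (1 - b5 - r2 * b8)) 0  0 b5 0  0 b8 1].

End Defs.

From HB Require Import structures.
From mathcomp Require Import all_boot all_order all_algebra.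
From mathcomp Require Import reals complex.
From mathcomp Require Import ring zify.
Set Implicit Arguments. Unset Strict Implicit. Unset Printing Implicit Defensive.
Import Order.TTheory GRing.Theory Num.Theory.
Local Open Scope ring_scope.

(* Only rho_1, rho_2, rho_3 and sigma_{1,t}, sigma_{3,t} matter: for i <= 3 their
   images are diag(X, I) with X in GL_5, so the relations among them already hold
   in GL_5, and every constraint comes from comparing entries of 5x5 products.
   rho_1 rho_3 = rho_3 rho_1 forces R_13 = R_31 = 0; splitting on whether R_12 and
   R_21 vanish, this relation together with rho_1^2 = 1 and the braid relation
   leaves only R = I and the four matrices R^(j).  For each R^(j), the commutation
   of sigma_{1,t} with rho_3 and of sigma_{3,t} with rho_1 (and, in families 3
   and 4, the relation rho_1 rho_2 sigma_{1,t} = sigma_{2,t} rho_1 rho_2) gives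
   S_t exactly the shape of family j, while for R = I the latter relation forces
   S_t = I, i.e. the trivial representation.  The representation is thus one of
   the eps_j on the nose. *)

Section Classification.
Variable C : fieldType.

Definition entry n (M : 'M[C]_n.+1) (a b : nat) : C := M (inord a) (inord b).
Arguments entry : simpl never.

Lemma entry_mul n (X Y : 'M[C]_n.+1) a b :
  entry (X *m Y) a b = \sum_(k < n.+1) entry X a k * entry Y k b.
Proof. by rewrite /entry mxE; apply: eq_bigr => k _; rewrite inord_val. Qed.

Lemma entry_mul5 (X Y : 'M[C]_5) a b : entry (X *m Y) a b =
  entry X a 0 * entry Y 0 b + entry X a 1 * entry Y 1 b + entry X a 2 * entry Y 2 b
  + entry X a 3 * entry Y 3 b + entry X a 4 * entry Y 4 b.
Proof. by rewrite entry_mul !big_ord_recl big_ord0 addr0 !addrA. Qed.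

Lemma inord_eq n (a b : nat) : (a <= n)%N -> (b <= n)%N ->
  (inord a == inord b :> 'I_n.+1) = (a == b).
Proof. by move=> ha hb; rewrite -val_eqE /= !inordK. Qed.

Lemma entry_scalar n a b : (a <= n)%N -> (b <= n)%N ->
  entry (1%:M : 'M[C]_n.+1) a b = (a == b)%:R.
Proof. by move=> ha hb; rewrite /entry mxE inord_eq. Qed.

(* [Nat.sub] rather than [subn], so that [/=] evaluates the offsets *)
Lemma entry_blk n i (M : 'M[C]_3) a b : (a <= n)%N -> (b <= n)%N ->
  entry (blk n i M) a b =
  if ((i.-1 <= a < i.+2) && (i.-1 <= b < i.+2))%N
  then entry M (Nat.sub a i.-1) (Nat.sub b i.-1) else (a == b)%:R.
Proof. by move=> ha hb; rewrite /entry /blk mxE !inordK // inord_eq. Qed.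

Lemma entry_mx3 a b c d e f g h k x y : (x < 3)%N -> (y < 3)%N ->
  entry (mx3 a b c d e f g h k) x y =
  nth 0 (nth [::] [:: [:: a; b; c]; [:: d; e; f]; [:: g; h; k]] x) y.
Proof. by move=> hx hy; rewrite /entry mxE !inordK. Qed.

Variant mx3_spec (M : 'M[C]_3) : Prop :=
  Mx3Spec a b c d e f g h k of M = mx3 a b c d e f g h k.

Lemma mx3P (M : 'M[C]_3) : mx3_spec M.
Proof.
apply: (@Mx3Spec M (entry M 0 0) (entry M 0 1) (entry M 0 2) (entry M 1 0) (entry M 1 1)
  (entry M 1 2) (entry M 2 0) (entry M 2 1) (entry M 2 2)).
apply/matrixP => i j; rewrite /mx3 /entry mxE.
by case: i j => [[|[|[|i]]] hi] [[|[|[|j]]] hj] //=; congr (M _ _); apply/val_inj; rewrite /= inordK.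
Qed.

Lemma eq_of_subr_eq (x y u v : C) : u = v -> x - y = u - v -> x = y.
Proof. by move=> -> /eqP; rewrite subrr subr_eq0 => /eqP. Qed.

Ltac rearrange h :=
  first [apply: (eq_of_subr_eq h); ring | apply: (eq_of_subr_eq (esym h)); ring].

(* [by_entry H a b] proves the goal when it is, up to sign, a ring rearrangement
   of the scalar equation given by entry (a, b) of the 5x5 matrix identity [H]. *)
Tactic Notation "by_entry" constr(H) uconstr(a) uconstr(b) :=
  let h := fresh in
  have h := congr1 (fun Z => entry Z a b) H;
  rewrite ?entry_mul5 ?entry_blk ?entry_scalar // /= ?entry_mx3 // /= in h;
  rearrange h.

Lemma det_mx3 (a b c d e f g h k : C) :
  \det (mx3 a b c d e f g h k) = a * (e * k - f * h) - b * (d * k - f * g) + c * (d * h - e * g).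
Proof.
rewrite (expand_det_row _ 0) !big_ord_recl big_ord0 /cofactor.
rewrite !(expand_det_row _ 0) !big_ord_recl big_ord0 /cofactor !det_mx11 !mxE !big_ord0 /=.
ring.
Qed.

Lemma mx3_1 : mx3 1 0 0 0 1 0 0 0 1 = 1%:M :> 'M[C]_3.
Proof. by apply/matrixP => -[[|[|[|i]]] hi] [[|[|[|j]]] hj]; rewrite !mxE. Qed.

Lemma blk_1 n i : blk n i 1%:M = 1%:M :> 'M[C]_n.+1.
Proof.
apply/matrixP => a b; rewrite /blk !mxE; case: ifP => // /andP[/andP[ha1 ha2] /andP[hb1 hb2]].
by rewrite inord_eq ?eqn_sub2rE //; lia.
Qed.

Lemma eq0_of_mull (x y : C) : x != 0 -> x * y = 0 -> y = 0.
Proof. by move=> /negPf hx /eqP; rewrite mulf_eq0 hx => /eqP. Qed.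

Lemma eq0_of_mulr (x y : C) : y != 0 -> x * y = 0 -> x = 0.
Proof. by move=> hy; rewrite mulrC; apply: eq0_of_mull. Qed.

Lemma eq0_of_sqr (x : C) : x ^+ 2 = 0 -> x = 0.
Proof. by move/eqP; rewrite sqrf_eq0 => /eqP. Qed.

Lemma mulf_eq1 (x y : C) : x * y = 1 -> x != 0 /\ y = x^-1.
Proof.
move=> hxy; have hx : x != 0 by apply: contra_eq_neq hxy => ->; rewrite mul0r eq_sym oner_neq0.
by split=> //; rewrite -(mulr1_eq hxy).
Qed.

Definition rho_rels (A : 'M[C]_3) : Prop :=
  [/\ blk 4 1 A *m blk 4 1 A = 1%:M,
      blk 4 1 A *m blk 4 3 A = blk 4 3 A *m blk 4 1 A &
      blk 4 1 A *m blk 4 2 A *m blk 4 1 A = blk 4 2 A *m blk 4 1 A *m blk 4 2 A].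

Definition R1 (b : C) := mx3 1 0 0  0 0 b  0 b^-1 0.
Definition R2 (b : C) := mx3 0 b 0  b^-1 0 0  0 0 1.
Definition R3 (b : C) := mx3 1 0 0  b^-1 (-1) b  0 0 1.
Definition R4 (b : C) := mx3 1 b 0  0 (-1) 0  0 b^-1 1.

Lemma rho_rels_corners r00 r01 r02 r10 r11 r12 r20 r21 r22 :
  rho_rels (mx3 r00 r01 r02 r10 r11 r12 r20 r21 r22) -> r02 = 0 /\ r20 = 0.
Proof.
case=> _ Hfar _; split; apply: eq0_of_sqr.
- by by_entry Hfar 0 4.
- by by_entry Hfar 4 0.
Qed.

Lemma rho_rels_diag r00 r11 r12 r21 r22 :
  let A := mx3 r00 0 0  0 r11 r12  0 r21 r22 in
  rho_rels A -> A = 1%:M \/ exists2 b, b != 0 & A = R1 b.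
Proof.
move=> A [Hsq _ Hbr]; rewrite /A {A} in Hsq Hbr *.
have e00 : r00 = 1.
  have e1 : r00 ^+ 2 = r00 by by_entry Hbr 0 0.
  have e2 : r00 ^+ 2 = 1 by by_entry Hsq 0 0.
  by rewrite -e1 e2.
subst r00; have [/andP[/eqP e12 /eqP e21] | n1221] := boolP ((r12 == 0) && (r21 == 0)).
  subst r12 r21; left.
  have e11 : r11 = 1.
    have e1 : r11 ^+ 2 = r11 by by_entry Hbr 1 1.
    have e2 : r11 ^+ 2 = 1 by by_entry Hsq 1 1.
    by rewrite -e1 e2.
  have e22 : r22 = 1.
    have e1 : r22 ^+ 2 = r22 by by_entry Hbr 3 3.
    have e2 : r22 ^+ 2 = 1 by by_entry Hsq 2 2.
    by rewrite -e1 e2.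
  by rewrite e11 e22 mx3_1.
right; have [s p] : r11 + r22 = 0 /\ r11 * r22 = 0.
  have [e12 | n12] := eqVneq r12 0.
    have n21 : r21 != 0 by move: n1221; rewrite e12 eqxx.
    by split; apply: (eq0_of_mull n21); [by_entry Hsq 2 1 | by_entry Hbr 2 1].
  by split; apply: (eq0_of_mull n12); [by_entry Hsq 1 2 | by_entry Hbr 1 2].
have e22 : r22 = - r11 by rearrange s.
subst r22; have e11 : r11 = 0 by apply: eq0_of_sqr; rearrange p.
subst r11; have [n12 e21] : r12 != 0 /\ r21 = r12^-1.
  by apply: mulf_eq1; by_entry Hsq 2 2.
by exists r12; rewrite // e21 oppr0.
Qed.

Lemma rho_rels_lower r00 r10 r11 r12 r21 r22 : r10 != 0 ->
  let A := mx3 r00 0 0  r10 r11 r12  0 r21 r22 in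
  rho_rels A -> exists2 b, b != 0 & A = R3 b.
Proof.
move=> n10 A [Hsq Hfar Hbr]; rewrite /A {A} in Hsq Hfar Hbr *.
have e21 : r21 = 0 by apply: (eq0_of_mulr n10); by_entry Hfar 3 1.
have e22 : r22 = 1 by apply/subr0_eq/(eq0_of_mulr n10); by_entry Hfar 3 2.
have s : r00 + r11 = 0 by apply: (eq0_of_mull n10); by_entry Hsq 1 0.
have e11 : r11 = - r00 by rearrange s.
subst r21 r22 r11; have e00 : r00 = 1.
  have e1 : r00 ^+ 2 = r00 by by_entry Hbr 0 0.
  have e2 : r00 ^+ 2 = 1 by by_entry Hsq 0 0.
  by rewrite -e1 e2.
subst r00; have p : r10 * r12 = 1.
  by apply/subr0_eq/(eq0_of_mull n10); by_entry Hbr 1 0.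
have [n12 e10] := mulf_eq1 (etrans (mulrC _ _) p).
by exists r12; rewrite // e10.
Qed.

Lemma rho_rels_upper r00 r01 r11 r12 r21 r22 : r01 != 0 ->
  let A := mx3 r00 r01 0  0 r11 r12  0 r21 r22 in
  rho_rels A -> exists2 b, b != 0 & A = R4 b.
Proof.
move=> n01 A [Hsq Hfar Hbr]; rewrite /A {A} in Hsq Hfar Hbr *.
have e12 : r12 = 0 by apply: (eq0_of_mulr n01); by_entry Hfar 1 3.
have e22 : r22 = 1 by apply/subr0_eq/(eq0_of_mulr n01); by_entry Hfar 2 3.
have s : r00 + r11 = 0 by apply: (eq0_of_mull n01); by_entry Hsq 0 1.
have e11 : r11 = - r00 by rearrange s.
subst r12 r22 r11; have e00 : r00 = 1.
  have e1 : r00 ^+ 2 = r00 by by_entry Hbr 0 0.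
  have e2 : r00 ^+ 2 = 1 by by_entry Hsq 0 0.
  by rewrite -e1 e2.
subst r00; have p : r01 * r21 = 1.
  by apply/subr0_eq/(eq0_of_mull n01); by_entry Hbr 0 1.
have [_ e21] := mulf_eq1 p.
by exists r01; rewrite // e21.
Qed.

Lemma rho_rels_offdiag r00 r01 r10 r11 r12 r21 r22 : r01 != 0 -> r10 != 0 ->
  let A := mx3 r00 r01 0  r10 r11 r12  0 r21 r22 in
  rho_rels A -> exists2 b, b != 0 & A = R2 b.
Proof.
move=> n01 n10 A [Hsq Hfar Hbr]; rewrite /A {A} in Hsq Hfar Hbr *.
have e12 : r12 = 0 by apply: (eq0_of_mulr n01); by_entry Hfar 1 3.
have e21 : r21 = 0 by apply: (eq0_of_mulr n10); by_entry Hfar 3 1.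
have e22 : r22 = 1 by apply/subr0_eq/(eq0_of_mulr n01); by_entry Hfar 2 3.
have s : r00 + r11 = 0 by apply: (eq0_of_mull n01); by_entry Hsq 0 1.
have e11 : r11 = - r00 by rearrange s.
subst r12 r21 r22 r11; have e00 : r00 = 0.
  by apply/eq0_of_sqr/(eq0_of_mull n01); by_entry Hbr 0 1.
subst r00; have [_ e10] : r01 != 0 /\ r10 = r01^-1.
  by apply: mulf_eq1; by_entry Hsq 0 0.
by exists r01; rewrite // e10 oppr0.
Qed.

Lemma rho_rels_cases A : rho_rels A ->
  A = 1%:M \/ exists2 b, b != 0 & [\/ A = R1 b, A = R2 b, A = R3 b | A = R4 b].
Proof.
case: (mx3P A) => r00 r01 r02 r10 r11 r12 r20 r21 r22 -> HA.
have [e02 e20] := rho_rels_corners HA; subst r02 r20.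
have [e01 | n01] := eqVneq r01 0; have [e10 | n10] := eqVneq r10 0; subst.
- by have [|[b hb ->]] := rho_rels_diag HA; [left | right; exists b; last constructor 1].
- by have [b hb ->] := rho_rels_lower n10 HA; right; exists b; last constructor 3.
- by have [b hb ->] := rho_rels_upper n01 HA; right; exists b; last constructor 4.
- by have [b hb ->] := rho_rels_offdiag n01 n10 HA; right; exists b; last constructor 2.
Qed.

Definition sigma_rels (A S : 'M[C]_3) : Prop :=
  [/\ blk 4 1 S *m blk 4 3 A = blk 4 3 A *m blk 4 1 S,
      blk 4 1 A *m blk 4 3 S = blk 4 3 S *m blk 4 1 A &
      blk 4 1 A *m blk 4 2 A *m blk 4 1 S = blk 4 2 S *m blk 4 1 A *m blk 4 2 A].

Lemma sigma_rels_1 S : sigma_rels 1%:M S -> S = 1%:M.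
Proof.
case: (mx3P S) => s00 s01 s02 s10 s11 s12 s20 s21 s22 -> [_ _ Hm].
rewrite !blk_1 !mul1mx !mulmx1 in Hm.
have e00 : s00 = 1 by by_entry Hm 0 0.
have e01 : s01 = 0 by by_entry Hm 0 1.
have e02 : s02 = 0 by by_entry Hm 0 2.
have e10 : s10 = 0 by by_entry Hm 1 0.
have e20 : s20 = 0 by by_entry Hm 2 0.
subst; have e11 : s11 = 1 by by_entry Hm 1 1.
have e12 : s12 = 0 by by_entry Hm 1 2.
have e21 : s21 = 0 by by_entry Hm 2 1.
subst; have e22 : s22 = 1 by by_entry Hm 2 2.
by rewrite e22 mx3_1.
Qed.

Lemma sigma_rels_R1 b S : b != 0 -> sigma_rels (R1 b) S -> S \in unitmx ->
  exists s5 s6 s8 s9, s5 * s9 - s6 * s8 != 0 /\ S = mx3 1 0 0  0 s5 s6  0 s8 s9.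
Proof.
move=> hb; case: (mx3P S) => s00 s01 s02 s10 s11 s12 s20 s21 s22 -> [_ H _] uS.
have hbi : b^-1 != 0 by rewrite invr_eq0.
have e00 : s00 = 1 by apply/subr0_eq/(eq0_of_mull hb); by_entry H 1 2.
have e01 : s01 = 0 by apply: (eq0_of_mull hb); by_entry H 1 3.
have e02 : s02 = 0 by apply: (eq0_of_mull hb); by_entry H 1 4.
have e10 : s10 = 0 by apply: (eq0_of_mull hbi); by_entry H 3 1.
have e20 : s20 = 0 by apply: (eq0_of_mull hbi); by_entry H 4 1.
subst; exists s11, s12, s21, s22; split=> //.
by move: uS; rewrite unitmxE unitfE det_mx3 !(mul0r, mulr0, mul1r, mulr1, subr0, addr0).
Qed.

Lemma sigma_rels_R2 b S : b != 0 -> sigma_rels (R2 b) S -> S \in unitmx ->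
  exists s1 s2 s4 s5, s1 * s5 - s2 * s4 != 0 /\ S = mx3 s1 s2 0  s4 s5 0  0 0 1.
Proof.
move=> hb; case: (mx3P S) => s00 s01 s02 s10 s11 s12 s20 s21 s22 -> [H _ _] uS.
have hbi : b^-1 != 0 by rewrite invr_eq0.
have e22 : s22 = 1 by apply/subr0_eq/(eq0_of_mulr hbi); by_entry H 3 2.
have e20 : s20 = 0 by apply: (eq0_of_mulr hbi); by_entry H 3 0.
have e21 : s21 = 0 by apply: (eq0_of_mulr hbi); by_entry H 3 1.
have e02 : s02 = 0 by apply: (eq0_of_mulr hb); by_entry H 0 3.
have e12 : s12 = 0 by apply: (eq0_of_mulr hb); by_entry H 1 3.
subst; exists s00, s01, s10, s11; split=> //.
by move: uS; rewrite unitmxE unitfE det_mx3 !(mul0r, mulr0, mul1r, mulr1, subr0, addr0).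
Qed.

Lemma sigma_rels_R3 b S : b != 0 -> sigma_rels (R3 b) S -> S \in unitmx ->
  exists s4 s5, s5 != 0 /\ S = mx3 1 0 0  s4 s5 (b * (1 - b * s4 - s5))  0 0 1.
Proof.
move=> hb; case: (mx3P S) => s00 s01 s02 s10 s11 s12 s20 s21 s22 -> [H1 H2 Hm] uS.
have hbi : b^-1 != 0 by rewrite invr_eq0.
have e22 : s22 = 1 by apply/subr0_eq/(eq0_of_mulr hbi); by_entry H1 3 2.
have e20 : s20 = 0 by apply: (eq0_of_mulr hbi); by_entry H1 3 0.
have e21 : s21 = 0 by apply: (eq0_of_mulr hbi); by_entry H1 3 1.
have e00 : s00 = 1 by apply/subr0_eq/(eq0_of_mull hb); by_entry H2 1 2.
have e01 : s01 = 0 by apply: (eq0_of_mull hb); by_entry H2 1 3.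
have e02 : s02 = 0 by apply: (eq0_of_mull hb); by_entry H2 1 4.
subst; have e12 : s12 = b * (1 - b * s10 - s11) by by_entry Hm 2 3.
subst; exists s10, s11; split=> //.
by move: uS; rewrite unitmxE unitfE det_mx3 !(mul0r, mulr0, mul1r, mulr1, subr0, addr0).
Qed.

Lemma sigma_rels_R4 b S : b != 0 -> sigma_rels (R4 b) S -> S \in unitmx ->
  exists s5 s8, s5 != 0 /\ S = mx3 1 (b * (1 - s5 - b * s8)) 0  0 s5 0  0 s8 1.
Proof.
move=> hb; case: (mx3P S) => s00 s01 s02 s10 s11 s12 s20 s21 s22 -> [H1 H2 Hm] uS.
have hbi : b^-1 != 0 by rewrite invr_eq0.
have e02 : s02 = 0 by apply: (eq0_of_mulr hb); by_entry H1 0 3.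
have e12 : s12 = 0 by apply: (eq0_of_mulr hb); by_entry H1 1 3.
have e22 : s22 = 1 by apply/subr0_eq/(eq0_of_mulr hb); by_entry H1 2 3.
have e10 : s10 = 0 by apply: (eq0_of_mull hbi); by_entry H2 3 1.
have e20 : s20 = 0 by apply: (eq0_of_mull hbi); by_entry H2 4 1.
have e00 : s00 = 1 by apply/subr0_eq/(eq0_of_mull hbi); by_entry H2 2 1.
subst; have e01 : s01 = b * (1 - s11 - b * s21) by by_entry Hm 0 1.
subst; exists s11, s21; split=> //.
by move: uS; rewrite unitmxE unitfE det_mx3 !(mul0r, mulr0, mul1r, mulr1, subr0, addr0).
Qed.

Definition pad p m (X : 'M[C]_p) : 'M[C]_(p + m) := block_mx X 0 0 1%:M.

Lemma padM p m (X Y : 'M[C]_p) : pad m X *m pad m Y = pad m (X *m Y).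
Proof. by rewrite /pad mulmx_block !mulmx0 !mul0mx !addr0 !add0r mulmx1. Qed.

Lemma pad_inj p m : injective (@pad p m).
Proof. by move=> X Y /eq_block_mx[]. Qed.

Lemma pad1 p m : pad m 1%:M = 1%:M :> 'M[C]_(p + m).
Proof. by rewrite /pad scalar_mx_block. Qed.

Lemma blk_pad m i M : (1 <= i <= 3)%N -> blk m.+4 i M = pad m (blk 4 i M).
Proof.
move=> hi; apply/matrixP => a b; rewrite /pad.
have out k : (5 + k < i.+2)%N = false by apply/negbTE; rewrite -leqNgt; lia.
rewrite -(@splitK 5 m a) -(@splitK 5 m b).
case: (@split 5 m a) => a'; case: (@split 5 m b) => b' /=.
- by rewrite (@block_mxEul _ 5 m 5 m) /blk !mxE.
- rewrite (@block_mxEur _ 5 m 5 m) /blk !mxE /= out !andbF -val_eqE /=.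
  by have /negbTE -> : (nat_of_ord a' != 5 + b')%N by have := ltn_ord a'; lia.
- rewrite (@block_mxEdl _ 5 m 5 m) /blk !mxE /= out !andbF -val_eqE /=.
  by have /negbTE -> : (5 + a' != nat_of_ord b')%N by have := ltn_ord b'; lia.
- by rewrite (@block_mxEdr _ 5 m 5 m) /blk !mxE /= out !andbF -val_eqE /= eqn_add2l.
Qed.

Lemma rels_of_UV2_rep m A S1 S2 : is_UV2_rep m.+4 A S1 S2 ->
  [/\ rho_rels A, sigma_rels A S1 & sigma_rels A S2].
Proof.
case=> Hbr [Hfar [Hsq [_ [Hsr Hmix]]]].
have sigma t : (1 <= t <= 2)%N -> sigma_rels A (if t == 1%N then S1 else S2).
  move=> ht; split; apply: (@pad_inj 5 m); rewrite -!padM -!blk_pad //.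
  - exact: Hsr 1%N 3%N t isT isT isT ht.
  - exact/esym/(Hsr 3%N 1%N t).
  - exact: Hmix 1%N t isT ht.
split; [split | exact: sigma 1%N isT | exact: sigma 2%N isT];
  apply: (@pad_inj 5 m); rewrite -!padM ?pad1 -!blk_pad //.
- exact: Hsq 1%N isT.
- exact: Hfar 1%N 3%N isT isT isT.
- exact: Hbr 1%N isT.
Qed.

Lemma UV4_classification A S1 S2 :
  S1 \in unitmx -> S2 \in unitmx -> rho_rels A -> sigma_rels A S1 -> sigma_rels A S2 ->
  ~ [/\ A = 1%:M, S1 = 1%:M & S2 = 1%:M] ->
  [\/ eps1 A S1 S2, eps2 A S1 S2, eps3 A S1 S2 | eps4 A S1 S2].
Proof.
move=> uS1 uS2 /rho_rels_cases[-> | [b hb [] ->]] H1 H2 nontriv.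
- by case: nontriv; split=> //; apply: sigma_rels_1.
- have [a5 [a6 [a8 [a9 [d1 ->]]]]] := sigma_rels_R1 hb H1 uS1.
  have [b5 [b6 [b8 [b9 [d2 ->]]]]] := sigma_rels_R1 hb H2 uS2.
  by constructor 1; exists b, a5, a6, a8, a9, b5, b6, b8, b9.
- have [a1 [a2 [a4 [a5 [d1 ->]]]]] := sigma_rels_R2 hb H1 uS1.
  have [b1 [b2 [b4 [b5 [d2 ->]]]]] := sigma_rels_R2 hb H2 uS2.
  by constructor 2; exists b, a1, a2, a4, a5, b1, b2, b4, b5.
- have [a4 [a5 [d1 ->]]] := sigma_rels_R3 hb H1 uS1.
  have [b4 [b5 [d2 ->]]] := sigma_rels_R3 hb H2 uS2.
  by constructor 3; exists b, a4, a5, b4, b5.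
- have [a5 [a8 [d1 ->]]] := sigma_rels_R4 hb H1 uS1.
  have [b5 [b8 [d2 ->]]] := sigma_rels_R4 hb H2 uS2.
  by constructor 4; exists b, a5, a8, b5, b8.
Qed.

Lemma equiv_rep_refl n (A S1 S2 : 'M[C]_3) : equiv_rep n A S1 S2 A S1 S2.
Proof.
exists 1%:M; first exact: unitmx1.
by move=> i _; rewrite invmx1 !mul1mx !mulmx1.
Qed.

End Classification.

Theorem theorem4p1 (R : realType) (n : nat) (hn : (4 <= n)%N)
    (A S1 S2 : 'M[R[i]]_3)
    (hrep : homog3local_rep n A S1 S2)
    (hnontriv : ~ trivial_rep n A S1 S2) :
  exists A' S1' S2' : 'M[R[i]]_3,
    equiv_rep n A S1 S2 A' S1' S2' /\
    [\/ eps1 A' S1' S2', eps2 A' S1' S2', eps3 A' S1' S2' | eps4 A' S1' S2'].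
Proof.
have [m em] : exists m, n = m.+4 by exists (n - 4)%N; lia.
subst n.
case: hrep => _ uS1 uS2 /rels_of_UV2_rep[HA H1 H2].
exists A, S1, S2; split; first exact: equiv_rep_refl.
apply: UV4_classification => // -[eA eS1 eS2].
by apply: hnontriv => i _; rewrite eA eS1 eS2 !blk_1.
Qed.
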